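(* There exists a deterministic distributed algorithm such that, for every graph $G$ (of any size $n$ and any diameter $D$), there is an assignment of advice to the nodes of $G$ with advice size $1$ (one node receives the bit $1$, all others receive the bit $0$) under which the algorithm accomplishes labeled topology recognition in $G$ within time $2D+1$.
   Context: Graphs are finite, simple, undirected, connected, with no node labels; at each node of degree $d$ the incident edges carry distinct port numbers $0,\dots,d-1$ (no coherence between endpoints). Two such graphs are isomorphic if there is a bijection of nodes preserving edges and the port numbers at both endpoints of every edge. Communication model (LOCAL): computation proceeds in synchronous rounds, all nodes start simultaneously; in each round every node may send arbitrary messages to all its neighbours, receives the messages of its neighbours (knowing the port through which each arrives), and performs arbitrary local computation. Initially a node knows only its degree and its advice. Advice: an oracle that knows the whole graph assigns to each node a binary string; the size of advice is the maximum length of these strings. All nodes execute the same deterministic algorithm, which does not know the graph. Anonymous topology recognition: every node outputs a port-labeled graph isomorphic to $G$. Labeled topology recognition: all nodes output the same port-labeled graph $H$ with distinct node labels, and each node outputs its own label, such that there is an isomorphism from $G$ to $H$ mapping every node to the node of $H$ carrying the label that node output. The time of recognition is the number of rounds after which all nodes have produced their output. *)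

From mathcomp Require Import all_boot.
Unset Strict Implicit. Unset Printing Implicit Defensive.

(** * Port-labeled graphs
    Nodes are 0, ..., pg_n - 1.  Node [v] has degree [pg_deg v]; for a port
    [p < pg_deg v], [pg_nbr v p = (u, q)] means that the edge leaving [v] by
    port [p] reaches [u], where it has port number [q]. *)
Record pgraph := PGraph {
  pg_n : nat;
  pg_deg : nat -> nat;
  pg_nbr : nat -> nat -> nat * nat }.

Fixpoint walk (G : pgraph) (k : nat) (u v : nat) : Prop :=
  match k with
  | 0 => u = v
  | k'.+1 => exists2 p, p < pg_deg G u & walk G k' (pg_nbr G u p).1 v
  end.

Definition pg_wf (G : pgraph) : Prop :=
  [/\ 0 < pg_n G,
      (forall v p, v < pg_n G -> p < pg_deg G v ->
         let: (u, q) := pg_nbr G v p in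
         [/\ u < pg_n G, q < pg_deg G u, pg_nbr G u q = (v, p) & u != v]),
      (forall v p1 p2, v < pg_n G -> p1 < pg_deg G v -> p2 < pg_deg G v ->
         (pg_nbr G v p1).1 = (pg_nbr G v p2).1 -> p1 = p2)
    &
      (forall u v, u < pg_n G -> v < pg_n G -> exists k, walk G k u v)].

Definition is_dist (G : pgraph) (u v d : nat) : Prop :=
  walk G d u v /\ (forall k, k < d -> ~ walk G k u v).

Definition is_diameter (G : pgraph) (D : nat) : Prop :=
  (exists u v, [/\ u < pg_n G, v < pg_n G & is_dist G u v D]) /\
  (forall u v d, u < pg_n G -> v < pg_n G -> is_dist G u v d -> d <= D).

Definition pg_iso (G H : pgraph) (f : nat -> nat) : Prop :=
  [/\ pg_n H = pg_n G,
      (forall v, v < pg_n G -> f v < pg_n H),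
      {in [pred v | v < pg_n G] &, injective f},
      (forall v, v < pg_n G -> pg_deg H (f v) = pg_deg G v)
    & (forall v p, v < pg_n G -> p < pg_deg G v ->
         pg_nbr H (f v) p = (f (pg_nbr G v p).1, (pg_nbr G v p).2))].

(** * Deterministic algorithms in the LOCAL model
    A node starts in state [alg_init d a] where [d] is its degree and [a] its
    advice; in each round it sends [alg_send s p] through each port [p], then
    updates its state with the list of messages received, indexed by the port
    of arrival.  [alg_out s] is [Some o] once the node has produced output [o].
    For labeled topology recognition the output is a port-labeled graph [H]
    whose nodes 0..pg_n H - 1 are the (distinct) labels, together with the
    label of the node itself. *)
Record algorithm := Algorithm {
  alg_state : Type;
  alg_msg : Type;
  alg_init : nat -> bitseq -> alg_state;
  alg_send : alg_state -> nat -> alg_msg;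
  alg_recv : alg_state -> seq alg_msg -> alg_state;
  alg_out : alg_state -> option (pgraph * nat) }.

Fixpoint exec (A : algorithm) (G : pgraph) (adv : nat -> bitseq) (t : nat)
  : nat -> alg_state A :=
  match t with
  | 0 => fun v => alg_init A (pg_deg G v) (adv v)
  | t'.+1 => fun v =>
      let st := exec A G adv t' in
      alg_recv A (st v)
        [seq alg_send A (st (pg_nbr G v p).1) (pg_nbr G v p).2
           | p <- iota 0 (pg_deg G v)]
  end.

Definition outputs_at (A : algorithm) (G : pgraph) (adv : nat -> bitseq)
    (v t : nat) (o : pgraph * nat) : Prop :=
  (forall s, s < t -> alg_out A (exec A G adv s v) = None) /\
  alg_out A (exec A G adv t v) = Some o.

Definition labeled_recognition_within (A : algorithm) (G : pgraph)
    (adv : nat -> bitseq) (T : nat) : Prop :=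
  exists (H : pgraph) (lab : nat -> nat),
    pg_iso G H lab /\
    forall v, v < pg_n G -> exists2 t, t <= T & outputs_at A G adv v t (H, lab v).

Definition one_marked_advice (G : pgraph) (adv : nat -> bitseq) : Prop :=
  exists2 r, r < pg_n G &
    adv r = [:: true] /\ (forall v, v < pg_n G -> v != r -> adv v = [:: false]).

From mathcomp Require Import all_boot zify.
From Stdlib Require Import ClassicalEpsilon FunctionalExtensionality PropExtensionality.
Set Implicit Arguments. Unset Strict Implicit. Unset Printing Implicit Defensive.

(* The algorithm is full information: after t rounds a node knows its view of
   depth t, and it outputs as soon as this view determines, over all graphs with
   one marked node, a canonical representative of its graph up to
   mark-preserving isomorphism together with its own image there.  Depth 2D+1
   suffices: a node v reaches any node u by a walk of length at most D, and
   from u the marked node by another walk of length at most D; the return ports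
   read along the second walk single out u.  Hence equal views of depth 2D+1 at
   v in G and v' in G' give a mark-preserving isomorphism G -> G' sending v to
   v', and isomorphic inputs have the same canonical representative. *)

Fixpoint follow (G : pgraph) (u : nat) (ps : seq nat) : nat :=
  if ps is p :: ps' then follow G (pg_nbr G u p).1 ps' else u.

Fixpoint walkable (G : pgraph) (u : nat) (ps : seq nat) : bool :=
  if ps is p :: ps' then (p < pg_deg G u) && walkable G (pg_nbr G u p).1 ps' else true.

Fixpoint back_ports (G : pgraph) (u : nat) (ps : seq nat) : seq nat :=
  if ps is p :: ps' then (pg_nbr G u p).2 :: back_ports G (pg_nbr G u p).1 ps'
  else [::].

Lemma follow_rcons G u ps p : follow G u (rcons ps p) = (pg_nbr G (follow G u ps) p).1.
Proof. by elim: ps u => //= q ps IH u. Qed.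

Lemma walkable_rcons G u ps p :
  walkable G u (rcons ps p) = walkable G u ps && (p < pg_deg G (follow G u ps)).
Proof. by elim: ps u => /= [|q ps IH] u; rewrite ?andbT // IH andbA. Qed.

Section WellFormed.
Variable G : pgraph.
Hypothesis wfG : pg_wf G.

Lemma pg_nbr_wf v p : v < pg_n G -> p < pg_deg G v ->
  [/\ (pg_nbr G v p).1 < pg_n G, (pg_nbr G v p).2 < pg_deg G (pg_nbr G v p).1
    & pg_nbr G (pg_nbr G v p).1 (pg_nbr G v p).2 = (v, p)].
Proof.
by case: wfG => _ nbrG _ _ Hv Hp; move: (nbrG v p Hv Hp); case: (pg_nbr G v p) => u q [].
Qed.

Lemma follow_lt u ps : u < pg_n G -> walkable G u ps -> follow G u ps < pg_n G.
Proof.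
elim: ps u => //= p ps IH u Hu /andP[Hp Hw].
by apply: IH => //; case: (pg_nbr_wf Hu Hp).
Qed.

(* Walking back along the recorded return ports recovers the starting node. *)
Lemma follow_back_ports_inj ps x y : x < pg_n G -> y < pg_n G ->
  walkable G x ps -> walkable G y ps -> back_ports G x ps = back_ports G y ps ->
  follow G x ps = follow G y ps -> x = y.
Proof.
elim: ps x y => //= p ps IH x y Hx Hy /andP[Hpx Hwx] /andP[Hpy Hwy] [Eq Eb] Ef.
case: (pg_nbr_wf Hx Hpx) => Hx1 _ Ex; case: (pg_nbr_wf Hy Hpy) => Hy1 _ Ey.
have E1 := IH _ _ Hx1 Hy1 Hwx Hwy Eb Ef.
by move: Ex Ey; rewrite E1 Eq => -> [].
Qed.

Lemma walk_walkable k u w :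
  walk G k u w -> exists ps, [/\ size ps = k, walkable G u ps & follow G u ps = w].
Proof.
elim: k u => [|k IH] u /=; first by move=> ->; exists [::].
by case=> p Hp /IH [ps [<- Hw Hf]]; exists (p :: ps); rewrite /= Hp Hw.
Qed.

Lemma walk_is_dist k u w : walk G k u w -> exists d, is_dist G u w d.
Proof.
elim: k {-2}k (leqnn k) => [|m IH] k Hk Hw.
  by exists k; split => // j; move: Hk; rewrite leqn0 => /eqP ->.
case: (classic (exists2 j, j < k & walk G j u w)) => [[j Hj Hwj]|Hmin].
  by apply: (IH j) => //; rewrite -ltnS (leq_trans Hj).
by exists k; split => // j Hj Hwj; apply: Hmin; exists j.
Qed.

Lemma short_walk D u w : is_diameter G D -> u < pg_n G -> w < pg_n G ->
  exists ps, [/\ size ps <= D, walkable G u ps & follow G u ps = w].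
Proof.
case=> _ diamG Hu Hw; case: wfG => _ _ _ connG.
case: (connG u w Hu Hw) => k /walk_is_dist [d distd].
have := diamG _ _ _ Hu Hw distd; case: distd => /walk_walkable [ps [<- Hps Hf]] _ HdD.
by exists ps.
Qed.

End WellFormed.

Lemma iota_bij_eq n m (g : nat -> nat) : (forall u, u < n -> g u < m) ->
  {in [pred u | u < n] &, injective g} ->
  (forall b, b < m -> exists2 u, u < n & g u = b) -> m = n.
Proof.
move=> gm ginj gonto.
have le_mn : size (iota 0 m) <= size [seq g u | u <- iota 0 n].
  apply: uniq_leq_size; first exact: iota_uniq.
  move=> b; rewrite mem_iota add0n => /gonto [u Hu <-].
  by apply: map_f; rewrite mem_iota.
have le_nm : size [seq g u | u <- iota 0 n] <= size (iota 0 m).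
  apply: uniq_leq_size.
    by rewrite map_inj_in_uniq ?iota_uniq // => x y; rewrite !mem_iota !add0n; apply: ginj.
  by move=> x /mapP [u]; rewrite !mem_iota !add0n => Hu ->; apply: gm.
by move: le_mn le_nm; rewrite size_map !size_iota => le1 le2; apply/eqP; rewrite eqn_leq le1 le2.
Qed.

Lemma pg_iso_id G : pg_iso G G id.
Proof. by split => // v p _ _; case: (pg_nbr G v p). Qed.

Lemma pg_iso_comp G1 G2 G3 f h :
  pg_iso G1 G2 f -> pg_iso G2 G3 h -> pg_iso G1 G3 (h \o f).
Proof.
case=> n12 r12 i12 d12 b12 [n23 r23 i23 d23 b23]; split => /=.
- by rewrite n23.
- by move=> v Hv; apply/r23/r12.
- by move=> x y Hx Hy /i23 E; apply: i12 => //; apply: E; rewrite inE; apply: r12.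
- by move=> v Hv; rewrite d23 ?d12 //; apply: r12.
- by move=> v p Hv Hp; rewrite b23 ?b12 ?d12 //; apply: r12.
Qed.

Lemma pg_iso_inv G H f : pg_wf G -> pg_iso G H f ->
  exists h, [/\ pg_iso H G h, forall u, u < pg_n G -> h (f u) = u
            & forall b, b < pg_n H -> f (h b) = b].
Proof.
move=> wfG [nHG rf inj df bf].
pose s := [seq f u | u <- iota 0 (pg_n G)].
have s_uniq : uniq s.
  by rewrite map_inj_in_uniq ?iota_uniq // => x y; rewrite !mem_iota !add0n; apply: inj.
have s_sub : {subset s <= iota 0 (pg_n H)}.
  by move=> x /mapP [u]; rewrite !mem_iota !add0n => Hu ->; apply: rf.
have [_ s_eq] : (size s = size (iota 0 (pg_n H))) * (s =i iota 0 (pg_n H)).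
  by apply: uniq_min_size => //; rewrite size_map !size_iota nHG.
pose h b := index b s.
have hlt b : b < pg_n H -> h b < pg_n G.
  move=> Hb; have : b \in s by rewrite s_eq mem_iota.
  by rewrite -index_mem size_map size_iota.
have fh b : b < pg_n H -> f (h b) = b.
  move=> Hb; have Hi := hlt b Hb.
  by rewrite -{2}(nth_index 0 (_ : b \in s)) ?s_eq ?mem_iota // (nth_map 0) ?nth_iota ?size_iota.
have hf u : u < pg_n G -> h (f u) = u.
  by move=> Hu; apply: inj; rewrite ?inE ?hlt ?fh //; apply: rf.
exists h; split => //; split => //.
- by move=> x y Hx Hy E; rewrite -(fh x Hx) -(fh y Hy) E.
- by move=> b Hb; rewrite -{2}(fh b Hb) df // hlt.
- move=> b p Hb Hp.
  have Hp' : p < pg_deg G (h b) by rewrite -df ?hlt // fh.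
  have [Hlt _ _] := pg_nbr_wf wfG (hlt b Hb) Hp'.
  have := bf _ _ (hlt b Hb) Hp'; rewrite fh // => ->.
  by rewrite /= hf //; case: (pg_nbr G (h b) p).
Qed.

Lemma pg_iso_unique G H f h r : pg_wf G -> pg_iso G H f -> pg_iso G H h ->
  r < pg_n G -> f r = h r -> forall u, u < pg_n G -> f u = h u.
Proof.
move=> wfG [_ _ _ _ bf] [_ _ _ _ bh] Hr Er u Hu.
case: (wfG) => _ _ _ connG; case: (connG r u Hr Hu) => k /walk_walkable [ps [_ Hw <-]].
elim: ps r Hr Er Hw {Hu} => //= p ps IH x Hx Ex /andP[Hp Hw].
apply: IH => //; first by case: (pg_nbr_wf wfG Hx Hp).
by have := bf x p Hx Hp; rewrite Ex bh // => -[].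
Qed.

Definition root_advice (k u : nat) : bitseq := [:: u == k].

Definition marked_iso G (adv : nat -> bitseq) H (advH : nat -> bitseq) f :=
  pg_iso G H f /\
  forall u, u < pg_n G -> adv u = [:: true] -> advH (f u) = [:: true].

Lemma one_marked_root_advice G k : k < pg_n G -> one_marked_advice G (root_advice k).
Proof. by exists k; rewrite /root_advice ?eqxx //; split => // u _ /negbTE ->. Qed.

Lemma marked_uniq G adv u w : one_marked_advice G adv ->
  u < pg_n G -> w < pg_n G -> adv u = [:: true] -> adv w = [:: true] -> u = w.
Proof.
case=> r _ [_ unmarked] Hu Hw Au Aw.
have at_r x : x < pg_n G -> adv x = [:: true] -> x = r.
  by move=> Hx Ax; apply/eqP; apply: contraT => /(unmarked x Hx); rewrite Ax.
by rewrite (at_r u Hu Au) (at_r w Hw Aw).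
Qed.

Lemma marked_iso_root G adv K k f : one_marked_advice G adv ->
  marked_iso G adv K (root_advice k) f -> one_marked_advice K (root_advice k).
Proof.
case=> r Hr [Ar _] [[_ fK _ _ _] fmark]; apply: one_marked_root_advice.
by move: (fmark r Hr Ar) (fK r Hr) => [/eqP <-].
Qed.

Lemma marked_iso_comp G1 G2 G3 a1 a2 a3 f h :
  marked_iso G1 a1 G2 a2 f -> marked_iso G2 a2 G3 a3 h -> marked_iso G1 a1 G3 a3 (h \o f).
Proof.
case=> If mf [Ih mh]; split; first exact: pg_iso_comp If Ih.
by case: If => _ fG2 _ _ _ u Hu Au; apply: mh; [apply: fG2 | apply: mf].
Qed.

Lemma marked_iso_inv G adv G' adv' g : pg_wf G ->
  one_marked_advice G adv -> one_marked_advice G' adv' ->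
  marked_iso G adv G' adv' g -> exists h, marked_iso G' adv' G adv h.
Proof.
move=> wfG oneG oneG' [Ig mg]; case: (pg_iso_inv wfG Ig) => h [Ih hg _].
exists h; split => // u' Hu' Au'; case: (oneG) => r Hr [Ar _].
case: Ig => _ gG' _ _ _.
by rewrite (marked_uniq oneG' Hu' (gG' r Hr) Au' (mg r Hr Ar)) hg.
Qed.

Lemma marked_iso_unique G adv H advH f h : pg_wf G ->
  one_marked_advice G adv -> one_marked_advice H advH ->
  marked_iso G adv H advH f -> marked_iso G adv H advH h ->
  forall u, u < pg_n G -> f u = h u.
Proof.
move=> wfG oneG oneH [If mf] [Ih mh]; case: (oneG) => r Hr [Ar _].
apply: (pg_iso_unique wfG If Ih Hr).
case: If Ih => _ fH _ _ _ [_ hH _ _ _].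
exact: (marked_uniq oneH (fH r Hr) (hH r Hr) (mf r Hr Ar) (mh r Hr Ar)).
Qed.

Inductive view : Type := View of nat & bitseq & seq (nat * view).

Fixpoint view_at (G : pgraph) (adv : nat -> bitseq) (t u : nat) : view :=
  View (pg_deg G u) (adv u)
    (if t is t'.+1 then
       [seq ((pg_nbr G u p).2, view_at G adv t' (pg_nbr G u p).1) | p <- iota 0 (pg_deg G u)]
     else [::]).

Section ViewEquality.
Variables (G G' : pgraph) (adv adv' : nat -> bitseq).

Lemma view_eq_deg_adv t u u' : view_at G adv t u = view_at G' adv' t u' ->
  pg_deg G u = pg_deg G' u' /\ adv u = adv' u'.
Proof. by case: t => [|t] [-> ->]. Qed.

Lemma view_eq_nbr t u u' p : view_at G adv t.+1 u = view_at G' adv' t.+1 u' ->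
  p < pg_deg G u ->
  (pg_nbr G u p).2 = (pg_nbr G' u' p).2 /\
  view_at G adv t (pg_nbr G u p).1 = view_at G' adv' t (pg_nbr G' u' p).1.
Proof.
move=> /= [Hd _ Hc] Hp.
have := congr1 (fun s => nth (0, View 0 [::] [::]) s p) Hc => /=.
by rewrite !(nth_map 0) ?size_iota -?Hd // !nth_iota -?Hd // => -[].
Qed.

Lemma view_eq_follow t u u' ps : view_at G adv t u = view_at G' adv' t u' ->
  size ps <= t -> walkable G u ps ->
  [/\ walkable G' u' ps, back_ports G u ps = back_ports G' u' ps &
      view_at G adv (t - size ps) (follow G u ps)
      = view_at G' adv' (t - size ps) (follow G' u' ps)].
Proof.
elim: ps t u u' => [|p ps IH] t u u' Ev /=; first by rewrite subn0.
case: t Ev => [|t] Ev //= Hs /andP[Hp Hw].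
have [Eq Ev1] := view_eq_nbr Ev Hp.
have [Hw' Eb Ev'] := IH _ _ _ Ev1 Hs Hw.
by rewrite -(view_eq_deg_adv Ev).1 Hp Hw' Eq Eb subSS.
Qed.

End ViewEquality.

Lemma marked_follow_inj G adv ps x y : pg_wf G -> one_marked_advice G adv ->
  x < pg_n G -> y < pg_n G -> walkable G x ps -> walkable G y ps ->
  adv (follow G x ps) = [:: true] -> adv (follow G y ps) = [:: true] ->
  back_ports G x ps = back_ports G y ps -> x = y.
Proof.
move=> wfG oneG Hx Hy Hwx Hwy Ax Ay Eb.
apply: (follow_back_ports_inj wfG Hx Hy Hwx Hwy Eb).
by apply: (marked_uniq oneG) => //; apply: follow_lt.
Qed.

(* The unique marked node of [G] lies within distance [D] of [x]; the return
   ports along a short walk to it single out the node of [G'] matching [x]. *)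
Lemma view_eq_node_unique G G' adv adv' D s t x x1 x2 :
  pg_wf G -> is_diameter G D -> one_marked_advice G adv ->
  pg_wf G' -> one_marked_advice G' adv' -> D <= s -> D <= t ->
  x < pg_n G -> x1 < pg_n G' -> x2 < pg_n G' ->
  view_at G adv s x = view_at G' adv' s x1 ->
  view_at G adv t x = view_at G' adv' t x2 -> x1 = x2.
Proof.
move=> wfG diamG oneG wfG' oneG' Ds Dt Hx Hx1 Hx2 E1 E2.
case: (oneG) => r Hr [Ar _]; have [rho [Hs Hw Hf]] := short_walk wfG diamG Hx Hr.
have [W1 B1 /view_eq_deg_adv [_ A1]] := view_eq_follow E1 (leq_trans Hs Ds) Hw.
have [W2 B2 /view_eq_deg_adv [_ A2]] := view_eq_follow E2 (leq_trans Hs Dt) Hw.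
rewrite Hf Ar in A1 A2.
by apply: (marked_follow_inj wfG' oneG' Hx1 Hx2 W1 W2) => //; rewrite -B1 -B2.
Qed.

Section Reconstruction.
Variables (G G' : pgraph) (adv adv' : nat -> bitseq) (D v v' : nat).
Hypotheses (wfG : pg_wf G) (diamG : is_diameter G D) (oneG : one_marked_advice G adv).
Hypotheses (wfG' : pg_wf G') (oneG' : one_marked_advice G' adv').
Hypotheses (Hv : v < pg_n G) (Hv' : v' < pg_n G').
Hypothesis eq_view : view_at G adv (2 * D + 1) v = view_at G' adv' (2 * D + 1) v'.

Definition route (u : nat) : seq nat :=
  epsilon (inhabits [::]) (fun ps => [/\ size ps <= D, walkable G v ps & follow G v ps = u]).

Lemma route_spec u : u < pg_n G ->
  [/\ size (route u) <= D, walkable G v (route u) & follow G v (route u) = u].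
Proof. by move=> Hu; apply: (epsilon_spec _ _ (short_walk wfG diamG Hv Hu)). Qed.

Definition reconstruct (u : nat) : nat := follow G' v' (route u).

Lemma view_reconstruct u : u < pg_n G ->
  [/\ walkable G' v' (route u), D < 2 * D + 1 - size (route u) &
      view_at G adv (2 * D + 1 - size (route u)) u
      = view_at G' adv' (2 * D + 1 - size (route u)) (reconstruct u)].
Proof.
move=> Hu; have [Hs Hw Hf] := route_spec Hu.
have Hs' : size (route u) <= 2 * D + 1 by lia.
have [W _ Ev] := view_eq_follow eq_view Hs' Hw.
by split => //; [lia | rewrite Hf in Ev].
Qed.

Lemma reconstruct_lt u : u < pg_n G -> reconstruct u < pg_n G'.
Proof. by move=> /view_reconstruct [W _ _]; apply: follow_lt. Qed.

Lemma reconstruct_deg u : u < pg_n G -> pg_deg G' (reconstruct u) = pg_deg G u.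
Proof. by move=> /view_reconstruct [_ _ /view_eq_deg_adv []]. Qed.

Lemma reconstruct_marked u : u < pg_n G -> adv u = [:: true] ->
  adv' (reconstruct u) = [:: true].
Proof. by move=> /view_reconstruct [_ _ /view_eq_deg_adv [_ <-]]. Qed.

Lemma follow_reconstruct ps : walkable G v ps -> size ps <= D.+1 ->
  follow G' v' ps = reconstruct (follow G v ps).
Proof.
move=> Hw Hs; set z := follow G v ps; have Hz : z < pg_n G by apply: follow_lt.
have Hs' : size ps <= 2 * D + 1 by lia.
have [W _ Ev] := view_eq_follow eq_view Hs' Hw.
have [_ Dz Evz] := view_reconstruct Hz.
apply: (view_eq_node_unique wfG diamG oneG wfG' oneG' _ _ Hz _ _ Ev Evz) => //.
- lia.
- lia.
- exact: follow_lt.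
- exact: reconstruct_lt.
Qed.

Lemma reconstruct_root : reconstruct v = v'.
Proof. by rewrite -(follow_reconstruct (ps := [::])). Qed.

Lemma reconstruct_nbr u p : u < pg_n G -> p < pg_deg G u ->
  pg_nbr G' (reconstruct u) p = (reconstruct (pg_nbr G u p).1, (pg_nbr G u p).2).
Proof.
move=> Hu Hp; have [Hs Hw Hf] := route_spec Hu.
have [_ Dr Ev] := view_reconstruct Hu; move: Ev.
have -> : 2 * D + 1 - size (route u) = (2 * D - size (route u)).+1 by lia.
move=> /view_eq_nbr /(_ Hp) [-> _].
have Hwp : walkable G v (rcons (route u) p) by rewrite walkable_rcons Hw Hf.
have Hsp : size (rcons (route u) p) <= D.+1 by rewrite size_rcons.
have := follow_reconstruct Hwp Hsp; rewrite !follow_rcons Hf -/(reconstruct u) => <-.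
by case: (pg_nbr G' _ p).
Qed.

Lemma reconstruct_inj : {in [pred u | u < pg_n G] &, injective reconstruct}.
Proof.
move=> u1 u2; rewrite !inE => Hu1 Hu2 E.
case: (oneG) => r Hr [Ar _]; have [rho [Hs Hw Hf]] := short_walk wfG diamG Hu1 Hr.
have [_ D1 Ev1] := view_reconstruct Hu1; have [_ D2 Ev2] := view_reconstruct Hu2.
have Hs1 : size rho <= 2 * D + 1 - size (route u1) by lia.
have Hs2 : size rho <= 2 * D + 1 - size (route u2) by lia.
have [W1 B1 /view_eq_deg_adv [_ A1]] := view_eq_follow Ev1 Hs1 Hw.
rewrite E in W1 B1 A1.
have [W2 B2 /view_eq_deg_adv [_ A2]] := view_eq_follow (esym Ev2) Hs2 W1.
apply: (marked_follow_inj wfG oneG Hu1 Hu2 Hw W2); first by rewrite Hf.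
  by rewrite -A2 -A1 Hf.
by rewrite B1 B2.
Qed.

Lemma reconstruct_onto b : b < pg_n G' -> exists2 u, u < pg_n G & reconstruct u = b.
Proof.
move=> Hb; case: (wfG') => _ _ _ connG'.
have [k /walk_walkable [ps [_ Hw <-]]] := connG' v' b Hv' Hb.
rewrite -reconstruct_root in Hw *.
elim: ps v Hv Hw => [|p ps IH] a Ha /=; first by exists a.
rewrite reconstruct_deg // => /andP[Hp Hw].
have [Hn _ _] := pg_nbr_wf wfG Ha Hp.
by move: Hw; rewrite reconstruct_nbr //=; apply: IH.
Qed.

Lemma reconstruct_iso : marked_iso G adv G' adv' reconstruct.
Proof.
split; last exact: reconstruct_marked.
split.
- exact: (iota_bij_eq reconstruct_lt reconstruct_inj reconstruct_onto).
- exact: reconstruct_lt.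
- exact: reconstruct_inj.
- exact: reconstruct_deg.
- exact: reconstruct_nbr.
Qed.

End Reconstruction.

Definition empty_pgraph : pgraph := PGraph 0 (fun _ => 0) (fun _ _ => (0, 0)).

Definition canon G adv : pgraph * nat :=
  epsilon (inhabits (empty_pgraph, 0))
    (fun Kk => exists f, marked_iso G adv Kk.1 (root_advice Kk.2) f).

Definition canon_label G adv : nat -> nat :=
  epsilon (inhabits id) (marked_iso G adv (canon G adv).1 (root_advice (canon G adv).2)).

Lemma canon_label_iso G adv : one_marked_advice G adv ->
  marked_iso G adv (canon G adv).1 (root_advice (canon G adv).2) (canon_label G adv).
Proof.
move=> oneG; apply: epsilon_spec; case: (oneG) => r Hr [Ar _].
have : exists Kk, exists f, marked_iso G adv Kk.1 (root_advice Kk.2) f.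
  exists (G, r), id; split; first exact: pg_iso_id.
  by move=> u Hu Au; rewrite /root_advice (marked_uniq oneG Hu Hr Au Ar) eqxx.
exact: epsilon_spec.
Qed.

Lemma canon_invariant G G' adv adv' g : pg_wf G ->
  one_marked_advice G adv -> one_marked_advice G' adv' ->
  marked_iso G adv G' adv' g -> canon G' adv' = canon G adv.
Proof.
move=> wfG oneG oneG' Ig; rewrite /canon; congr epsilon.
apply: functional_extensionality => Kk; apply: propositional_extensionality.
split => [[f' If'] | [f If]]; first by exists (f' \o g); apply: marked_iso_comp Ig If'.
have [h Ih] := marked_iso_inv wfG oneG oneG' Ig.
by exists (f \o h); apply: marked_iso_comp Ih If.
Qed.

Definition answer G adv (v : nat) : pgraph * nat := ((canon G adv).1, canon_label G adv v).

Lemma answer_invariant G G' adv adv' g v : pg_wf G ->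
  one_marked_advice G adv -> one_marked_advice G' adv' ->
  marked_iso G adv G' adv' g -> v < pg_n G -> answer G' adv' (g v) = answer G adv v.
Proof.
move=> wfG oneG oneG' Ig Hv; have Ecanon := canon_invariant wfG oneG oneG' Ig.
have L := canon_label_iso oneG; have L' := canon_label_iso oneG'.
rewrite Ecanon in L'; rewrite /answer Ecanon.
congr pair; exact: (marked_iso_unique wfG oneG (marked_iso_root oneG L)
                      (marked_iso_comp Ig L') L Hv).
Qed.

Lemma view_determines_answer G G' adv adv' D v v' :
  pg_wf G -> is_diameter G D -> one_marked_advice G adv ->
  pg_wf G' -> one_marked_advice G' adv' -> v < pg_n G -> v' < pg_n G' ->
  view_at G adv (2 * D + 1) v = view_at G' adv' (2 * D + 1) v' ->
  answer G' adv' v' = answer G adv v.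
Proof.
move=> wfG diamG oneG wfG' oneG' Hv Hv' Ev.
rewrite -(reconstruct_root wfG diamG oneG wfG' oneG' Hv Hv' Ev).
apply: (answer_invariant wfG oneG oneG' _ Hv).
exact: (reconstruct_iso wfG diamG oneG wfG' oneG' Hv Hv' Ev).
Qed.

(* A node answers as soon as its view determines the answer in every
   advised graph that could have produced it. *)
Definition determines (t : nat) (s : view) (o : pgraph * nat) : Prop :=
  forall G adv v, pg_wf G -> one_marked_advice G adv -> v < pg_n G ->
    view_at G adv t v = s -> answer G adv v = o.

Definition recognize_out (st : nat * view) : option (pgraph * nat) :=
  if excluded_middle_informative (exists o, determines st.1 st.2 o)
  then Some (epsilon (inhabits (empty_pgraph, 0)) (determines st.1 st.2)) else None.

Definition recognize_recv (st : nat * view) (ms : seq (nat * view * nat)) : nat * view :=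
  let: (t, View d a _) := st in (t.+1, View d a [seq (m.2, m.1.2) | m <- ms]).

Definition recognize : algorithm :=
  @Algorithm (nat * view) (nat * view * nat) (fun d a => (0, View d a [::]))
    pair recognize_recv recognize_out.

Lemma exec_recognize G adv t u : exec recognize G adv t u = (t, view_at G adv t u).
Proof.
elim: t u => [|t IH] u //=; rewrite IH; under eq_map => p do rewrite IH.
by case: t {IH} => [|t] /=; rewrite -map_comp.
Qed.

Lemma recognize_out_answer G adv t v o : pg_wf G -> one_marked_advice G adv ->
  v < pg_n G -> recognize_out (t, view_at G adv t v) = Some o -> o = answer G adv v.
Proof.
move=> wfG oneG Hv; rewrite /recognize_out /=.
case: excluded_middle_informative => // det [<-].
by apply/esym/(epsilon_spec _ _ det).
Qed.

Theorem proposition3p1 :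
  exists A : algorithm,
    forall (G : pgraph) (D : nat), pg_wf G -> is_diameter G D ->
      exists adv : nat -> bitseq,
        one_marked_advice G adv /\
        labeled_recognition_within A G adv (2 * D + 1).
Proof.
exists recognize => G D wfG diamG.
have oneG : one_marked_advice G (root_advice 0).
  by apply: one_marked_root_advice; case: wfG.
exists (root_advice 0); split => //.
exists (canon G (root_advice 0)).1, (canon_label G (root_advice 0)).
split; first by case: (canon_label_iso oneG).
move=> v Hv; pose answered t := isSome (recognize_out (t, view_at G (root_advice 0) t v)).
have answered_T : answered (2 * D + 1).
  rewrite /answered /recognize_out /=; case: excluded_middle_informative => // -[].
  exists (answer G (root_advice 0) v) => G' adv' v' wfG' oneG' Hv' Ev.
  exact: (view_determines_answer wfG diamG oneG wfG' oneG' Hv Hv' (esym Ev)).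
have [t answered_t t_min] := ex_minnP (ex_intro answered _ answered_T).
exists t; first exact: t_min.
split => [s lt_st | ]; rewrite exec_recognize.
  have : ~~ answered s by apply/negP => /t_min; lia.
  by rewrite /answered /=; case: recognize_out.
move: answered_t; rewrite /answered /=; case E: recognize_out => [o|] // _.
by rewrite (recognize_out_answer wfG oneG Hv E).
Qed.
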